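(* Let $K$ be a field of characteristic zero and $n\geq 2$. If $\sigma$ is a Lie algebra automorphism of $\mathfrak{Div}_n^c$ such that $\sigma(\partial)=\partial$ for all $\partial\in\mathfrak{Div}_n^0$, then $\sigma$ is the identity.
   Context: $S_n=K[[x_1,\ldots,x_n]]$, $\partial_i=\partial/\partial x_i$, and $\operatorname{Der}_K(S_n)=\bigoplus_i S_n\partial_i$ is the Lie algebra of $K$-derivations of $S_n$ with the commutator bracket. For $\partial=\sum_i a_i\partial_i$, $\operatorname{div}(\partial)=\sum_i\partial a_i/\partial x_i$. $\mathfrak{Div}_n^0=\{\partial\in\operatorname{Der}_K(S_n)\mid\operatorname{div}(\partial)=0\}$ and $\mathfrak{Div}_n^c=\{\partial\in\operatorname{Der}_K(S_n)\mid\operatorname{div}(\partial)\in K\}$. *)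

(* Formal power series K[[x_1..x_n]] as coefficient functions on monomials. *)
From HB Require Import structures.
From mathcomp Require Import all_boot all_order all_algebra.
Set Implicit Arguments. Unset Strict Implicit. Unset Printing Implicit Defensive.
Import Order.TTheory GRing.Theory.
Local Open Scope ring_scope.

Section PowerSeries.
Variables (K : fieldType) (n : nat).

Definition mon := {ffun 'I_n -> nat}.
Definition mon0 : mon := [ffun => 0%N].

Definition series := mon -> K.

Definition pderiv (i : 'I_n) (f : series) : series :=
  fun m => (m i).+1%:R * f [ffun j => (m j + (j == i))%N].

Definition smul (f g : series) : series :=
  fun m => \sum_(a : {ffun 'I_n -> 'I_(\sum_(j < n) m j).+1} | [forall j, (a j <= m j)%N])
             f [ffun j => nat_of_ord (a j)] * g [ffun j => (m j - a j)%N].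

(* a derivation sum_i a_i d_i of S_n, given by its coefficients a_i *)
Definition der := 'I_n -> series.

Definition dadd (d e : der) : der := fun i m => d i m + e i m.
Definition dscale (c : K) (d : der) : der := fun i m => c * d i m.

(* commutator bracket [sum a_i d_i, sum b_j d_j] = sum_j (sum_i a_i d_i b_j - b_i d_i a_j) d_j *)
Definition lie (d e : der) : der :=
  fun j m => \sum_(i < n) (smul (d i) (pderiv i (e j)) m - smul (e i) (pderiv i (d j)) m).

Definition div (d : der) : series := fun m => \sum_(i < n) pderiv i (d i) m.

Definition Div0 (d : der) : Prop := forall m, div d m = 0.
(* Div_n^c : divergence is a constant of K (coefficients of nonconstant monomials vanish) *)
Definition Divc (d : der) : Prop := forall m, m != mon0 -> div d m = 0.

Definition lie_aut_Divc (sigma : der -> der) : Prop :=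
  (forall d, Divc d -> Divc (sigma d)) /\
  (forall d e, Divc d -> Divc e -> sigma (dadd d e) = dadd (sigma d) (sigma e)) /\
  (forall (c : K) d, Divc d -> sigma (dscale c d) = dscale c (sigma d)) /\
  (forall d e, Divc d -> Divc e -> sigma (lie d e) = lie (sigma d) (sigma e)) /\
  (forall d e, Divc d -> Divc e -> sigma d = sigma e -> d = e) /\
  (forall e, Divc e -> exists d, Divc d /\ sigma d = e).

End PowerSeries.

From mathcomp Require Import all_boot all_order all_algebra.
From Stdlib Require Import FunctionalExtensionality.
Set Implicit Arguments. Unset Strict Implicit. Unset Printing Implicit Defensive.
Import Order.TTheory GRing.Theory.
Local Open Scope ring_scope.

(* The derivation x_i d_i has divergence 1, so every element of Div^c is an
   element of Div^0 plus a scalar multiple of x_i d_i, and it suffices to show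
   that sigma fixes x_i d_i.  Brackets of x_i d_i with d_j and with x_j d_k
   (k != j) have divergence zero, hence are fixed by sigma; comparing the two
   sides of sigma [x_i d_i, e] = [sigma (x_i d_i), e] for e = d_j shows that
   sigma (x_i d_i) and x_i d_i have the same partial derivatives (so, in
   characteristic zero, the same non-constant coefficients), and for
   e = x_j d_k that their j-th components have the same constant term. *)

Section PowerSeries.
Variables (K : fieldType) (n : nat).
Implicit Types (f g : series K n) (m : mon n) (X d : der K n).

Definition szero : series K n := fun _ => 0.
Definition sone : series K n := fun m => if m == mon0 n then 1 else 0.
Definition sX (j : 'I_n) : series K n :=
  fun m => if m == [ffun k => nat_of_bool (k == j)] then 1 else 0.

Definition shift m (i : 'I_n) : mon n := [ffun j => (m j + (j == i))%N].

Lemma pderivE i f m : pderiv i f m = (m i).+1%:R * f (shift m i).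
Proof. by []. Qed.

Lemma shift_neq0 m i : shift m i != mon0 n.
Proof. by apply/negP => /eqP/ffunP/(_ i); rewrite !ffunE eqxx addn1. Qed.

Lemma sX_mon0 j : sX j (mon0 n) = 0.
Proof. by rewrite /sX ifF //; apply/negbTE/negP => /eqP/ffunP/(_ j); rewrite !ffunE eqxx. Qed.

Lemma sX_shift m l j : sX j (shift m l) = if (l == j) && (m == mon0 n) then 1 else 0.
Proof.
rewrite /sX; case: (boolP ((l == j) && (m == mon0 n))) => [/andP[/eqP-> /eqP->]|h].
  by rewrite ifT //; apply/eqP/ffunP => k; rewrite !ffunE.
rewrite ifF //; apply/negbTE/negP => /eqP/ffunP E; move: h.
have El := E l; rewrite !ffunE eqxx addn1 in El.
case: (eqVneq l j) El => [lj|//] _ /=; subst j.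
move/negP; apply; apply/eqP/ffunP => k; have := E k; rewrite !ffunE.
by case: (k == l) => /=; [rewrite addn1; case => -> | rewrite addn0].
Qed.

Lemma smul_single f g m (b : {ffun 'I_n -> 'I_(\sum_(j < n) m j).+1}) :
  (forall j, b j <= m j)%N ->
  (forall a : {ffun 'I_n -> 'I_(\sum_(j < n) m j).+1}, (forall j, a j <= m j)%N ->
      a != b -> f [ffun j => nat_of_ord (a j)] * g [ffun j => (m j - a j)%N] = 0) ->
  smul f g m = f [ffun j => nat_of_ord (b j)] * g [ffun j => (m j - b j)%N].
Proof.
move=> bm others; rewrite /smul (bigD1 b) /=; last exact/forallP.
by rewrite [X in _ + X]big1 ?addr0 // => a /andP[/forallP am]; apply: others.
Qed.

Lemma smul_mon0 f g : smul f g (mon0 n) = f (mon0 n) * g (mon0 n).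
Proof.
rewrite (@smul_single _ _ _ [ffun => ord0]) => [||a am].
- by congr (f _ * g _); apply/ffunP => j; rewrite !ffunE.
- by move=> j; rewrite ffunE.
- case/eqP; apply/ffunP => j; rewrite !ffunE; apply/val_inj => /=.
  by have := am j; rewrite ffunE; case: (nat_of_ord (a j)).
Qed.

Lemma smulr0 f m : smul f szero m = 0.
Proof. by rewrite /smul big1 // => a _; rewrite mulr0. Qed.

Lemma smul0r g m : smul szero g m = 0.
Proof. by rewrite /smul big1 // => a _; rewrite mul0r. Qed.

Lemma smul1r g m : smul sone g m = g m.
Proof.
rewrite (@smul_single _ _ _ [ffun => ord0]) => [||a am ne].
- rewrite /sone ifT; last by apply/eqP/ffunP => j; rewrite !ffunE.
  by rewrite mul1r; congr g; apply/ffunP => j; rewrite !ffunE subn0.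
- by move=> j; rewrite ffunE.
- rewrite /sone ifF ?mul0r //; apply/negbTE; apply: contra ne.
  move/eqP/ffunP => E; apply/eqP/ffunP => j; apply/val_inj.
  by have := E j; rewrite !ffunE.
Qed.

Lemma smulr1 f m : smul f sone m = f m.
Proof.
have le_sum j : (m j < (\sum_(i < n) m i).+1)%N by rewrite ltnS (bigD1 j) //= leq_addr.
pose b : {ffun 'I_n -> 'I_(\sum_(j < n) m j).+1} := [ffun j => inord (m j)].
have bE j : nat_of_ord (b j) = m j by rewrite ffunE inordK.
clearbody b.
rewrite (@smul_single _ _ _ b) => [||a am ne].
- rewrite /sone ifT; last by apply/eqP/ffunP => j; rewrite !ffunE bE subnn.
  by rewrite mulr1; congr f; apply/ffunP => j; rewrite !ffunE bE.
- by move=> j; rewrite bE.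
- rewrite /sone ifF ?mulr0 //; apply/negbTE; apply: contra ne.
  move/eqP/ffunP => E; apply/eqP/ffunP => j; apply/val_inj.
  have := E j; rewrite !ffunE /= bE => /eqP; rewrite subn_eq0 => h.
  by apply/eqP; rewrite eqn_leq h am.
Qed.

Lemma pderiv_sX l j : pderiv l (sX j) = if l == j then sone else szero.
Proof.
apply: functional_extensionality => m; rewrite pderivE sX_shift.
case: (eqVneq l j) => _ /=; last by rewrite mulr0.
by rewrite /sone; case: eqVneq => [->|_]; rewrite ?ffunE ?mulr1 ?mulr0.
Qed.

Lemma pderiv0 i : pderiv i szero = szero.
Proof. by apply: functional_extensionality => m; rewrite pderivE mulr0. Qed.

Lemma pderiv1 i : pderiv i sone = szero.
Proof.
apply: functional_extensionality => m.
by rewrite pderivE /sone ifF ?mulr0 //; apply/negbTE/shift_neq0.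
Qed.

Lemma eq_coef_pderiv f g m : [pchar K] =i pred0 ->
  (forall j m', pderiv j f m' = pderiv j g m') -> m != mon0 n -> f m = g m.
Proof.
move=> char0 fg m_neq0.
have [l ml] : exists l, m l != 0%N.
  apply/existsP; apply: contraR m_neq0; rewrite negb_exists => /forallP ml.
  by apply/eqP/ffunP => l; rewrite ffunE; apply/eqP/negbNE.
pose m' : mon n := [ffun j => (m j - (j == l))%N].
have <- : shift m' l = m.
  apply/ffunP => j; rewrite !ffunE; case: eqVneq => [->|_]; last by rewrite !subn0 addn0.
  by rewrite subnK // lt0n.
by have := fg l m'; rewrite !pderivE; apply: mulfI; move/pcharf0P: char0 => ->.
Qed.

Definition dpartial (j : 'I_n) : der K n := fun k => if k == j then sone else szero.
Definition xdpartial (j i : 'I_n) : der K n := fun k => if k == i then sX j else szero.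

Lemma pderiv_dpartial l j k : pderiv l (dpartial j k) = szero.
Proof. by rewrite /dpartial; case: (k == j); rewrite ?pderiv1 ?pderiv0. Qed.

Lemma pderiv_xdpartial l j i k :
  pderiv l (xdpartial j i k) = if (k == i) && (l == j) then sone else szero.
Proof. by rewrite /xdpartial; case: (k == i); rewrite ?pderiv_sX ?pderiv0. Qed.

Lemma lie_dpartial X j k m : lie X (dpartial j) k m = - pderiv j (X k) m.
Proof.
rewrite /lie sumrB big1 ?sub0r => [|l _]; last by rewrite pderiv_dpartial smulr0.
rewrite (bigD1 j) //= big1 ?addr0 => [|l /negbTE lj]; last by rewrite /dpartial lj smul0r.
by rewrite /dpartial eqxx smul1r.
Qed.

Lemma lie_xdpartial X j i k m :
  lie X (xdpartial j i) k m = (if k == i then X j m else 0) - smul (sX j) (pderiv i (X k)) m.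
Proof.
rewrite /lie sumrB; congr (_ - _).
  under eq_bigr do rewrite pderiv_xdpartial.
  case: (k == i) => /=; last by rewrite big1 // => l _; rewrite smulr0.
  rewrite (bigD1 j) //= big1 ?addr0 => [|l /negbTE lj]; first by rewrite eqxx smulr1.
  by rewrite lj smulr0.
rewrite (bigD1 i) //= big1 ?addr0 => [|l /negbTE li]; first by rewrite /xdpartial eqxx.
by rewrite /xdpartial li smul0r.
Qed.

Lemma divE X m : div X m = \sum_(k < n) (m k).+1%:R * X k (shift m k).
Proof. by []. Qed.

Lemma div_dscale c X m : div (dscale c X) m = c * div X m.
Proof. by rewrite !divE mulr_sumr; apply: eq_bigr => k _; rewrite mulrCA. Qed.

Lemma Div0_Divc X : Div0 X -> Divc X.
Proof. by move=> X0 m _; apply: X0. Qed.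

Lemma Divc_dscale c X : Divc X -> Divc (dscale c X).
Proof. by move=> Xc m m_neq0; rewrite div_dscale Xc ?mulr0. Qed.

Lemma Div0_dpartial j : Div0 (dpartial j).
Proof.
move=> m; rewrite divE big1 // => k _; rewrite /dpartial.
case: (k == j); last by rewrite mulr0.
by rewrite /sone ifF ?mulr0 //; apply/negbTE/shift_neq0.
Qed.

Lemma Div0_xdpartial j i : i != j -> Div0 (xdpartial j i).
Proof.
move=> ij m; rewrite divE big1 // => k _; rewrite /xdpartial.
by case: eqVneq => [->|_]; rewrite ?sX_shift ?(negbTE ij) mulr0.
Qed.

Lemma div_xdpartial_diag i m : div (xdpartial i i) m = sone m.
Proof.
rewrite divE (bigD1 i) //= big1 ?addr0 => [|k /negbTE ki]; last first.
  by rewrite /xdpartial ki mulr0.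
rewrite /xdpartial eqxx sX_shift eqxx /= /sone.
by case: eqVneq => [->|_]; rewrite ?ffunE ?mulr1 ?mulr0.
Qed.

Lemma Divc_xdpartial_diag i : Divc (xdpartial i i).
Proof. by move=> m m_neq0; rewrite div_xdpartial_diag /sone (negbTE m_neq0). Qed.

Lemma Div0_lie_xdpartial_dpartial i j : Div0 (lie (xdpartial i i) (dpartial j)).
Proof.
move=> m; rewrite divE big1 // => k _; rewrite lie_dpartial pderivE /xdpartial.
case: (k == i); last by rewrite !mulr0 oppr0 mulr0.
by rewrite sX_shift (negbTE (shift_neq0 _ _)) andbF !mulr0 oppr0 mulr0.
Qed.

Lemma Div0_lie_xdpartial l j i : i != j -> Div0 (lie (xdpartial l l) (xdpartial j i)).
Proof.
move=> ij m; rewrite divE big1 // => k _; rewrite lie_xdpartial pderiv_xdpartial.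
have -> : (if k == i then xdpartial l l j (shift m k) else 0) = 0.
  case: eqVneq => [->|//]; rewrite /xdpartial.
  by case: eqVneq => [jl|//]; rewrite sX_shift -jl (negbTE ij).
case: ifP => [/andP[/eqP-> /eqP il]|_]; last by rewrite smulr0 subr0 mulr0.
by rewrite smulr1 sX_shift -il (negbTE ij) subr0 mulr0.
Qed.

Lemma Divc_decomp i d : Divc d ->
  exists2 d0, Div0 d0 & d = dadd d0 (dscale (div d (mon0 n)) (xdpartial i i)).
Proof.
move=> dc; set c := div d (mon0 n).
exists (fun k m => d k m - c * xdpartial i i k m); last first.
  by do 2 apply: functional_extensionality => ?; rewrite /dadd /dscale subrK.
move=> m; have -> : div (fun k m => d k m - c * xdpartial i i k m) m
                    = div d m - c * div (xdpartial i i) m.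
  by rewrite !divE mulr_sumr -sumrB; apply: eq_bigr => k _; rewrite mulrBr mulrCA.
rewrite div_xdpartial_diag /sone; case: eqVneq => [->|m_neq0]; first by rewrite mulr1 subrr.
by rewrite dc // mulr0 subr0.
Qed.

End PowerSeries.

Section FixingDiv0.
Variables (K : fieldType) (n : nat) (sigma : der K n -> der K n).
Hypothesis sigma_lie : forall d e, Divc d -> Divc e -> sigma (lie d e) = lie (sigma d) (sigma e).
Hypothesis sigma_Div0 : forall d, Div0 d -> sigma d = d.

Lemma pderiv_sigma X j k m : Divc X -> Div0 (lie X (dpartial K j)) ->
  pderiv j (sigma X k) m = pderiv j (X k) m.
Proof.
move=> Xc lie0; have := sigma_lie Xc (Div0_Divc (Div0_dpartial K j)).
rewrite sigma_Div0 // (sigma_Div0 (Div0_dpartial K j)) => /(congr1 (fun D => D k m)).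
by rewrite !lie_dpartial => /oppr_inj.
Qed.

Lemma sigma_coef0 X j i : i != j -> Divc X -> Div0 (lie X (xdpartial K j i)) ->
  sigma X j (mon0 n) = X j (mon0 n).
Proof.
move=> ij Xc lie0; have := sigma_lie Xc (Div0_Divc (Div0_xdpartial K ij)).
rewrite sigma_Div0 // (sigma_Div0 (Div0_xdpartial K ij)) => /(congr1 (fun D => D i (mon0 n))).
by rewrite !lie_xdpartial eqxx !smul_mon0 sX_mon0 !mul0r !subr0.
Qed.

Lemma sigma_xdpartial_diag i : [pchar K] =i pred0 -> (2 <= n)%N ->
  sigma (xdpartial K i i) = xdpartial K i i.
Proof.
move=> char0 n2; apply: functional_extensionality => k.
apply: functional_extensionality => m.
have xii_Divc := Divc_xdpartial_diag K i.
case: (eqVneq m (mon0 n)) => [->|m_neq0]; last first.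
  apply: eq_coef_pderiv char0 _ m_neq0 => j m'.
  exact: pderiv_sigma xii_Divc (Div0_lie_xdpartial_dpartial K i j).
have [l lk] : exists l : 'I_n, l != k.
  have n0 : (0 < n)%N := ltnW n2.
  case: (eqVneq k (Ordinal n0)) => [->|k_neq0]; first by exists (Ordinal n2).
  by exists (Ordinal n0); rewrite eq_sym.
exact: sigma_coef0 lk xii_Divc (Div0_lie_xdpartial K i lk).
Qed.

End FixingDiv0.

Theorem lemma1p8 (K : fieldType) (n : nat) (sigma : der K n -> der K n) :
  [pchar K] =i pred0 -> (2 <= n)%N ->
  lie_aut_Divc sigma ->
  (forall d, Div0 d -> sigma d = d) ->
  forall d, Divc d -> sigma d = d.
Proof.
move=> char0 n2 [_ [sigma_add [sigma_scale [sigma_lie _]]]] sigma_Div0 d dc.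
have i : 'I_n by exists 0%N; apply: leq_trans n2.
have [d0 d0_Div0 ->] := Divc_decomp i dc.
have xii_Divc := Divc_xdpartial_diag K i.
rewrite sigma_add ?sigma_scale //; last by [exact: Div0_Divc | exact: Divc_dscale].
by rewrite (sigma_Div0 _ d0_Div0) (sigma_xdpartial_diag sigma_lie sigma_Div0 i char0 n2).
Qed.
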